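(* Let $G_N=(V,E)$ be a connected, undirected, edge-weighted graph on $N$ nodes, $u\in V$ an initial mutant node, and $r\ge 1$. Then one of the following holds: (1) $\gamma^{\mathrm{Bd}}_r(G_N,u)<\gamma^{\mathrm{Bd}}_r(K_N)$; (2) $\gamma^{\mathrm{dB}}_r(G_N,u)<\gamma^{\mathrm{dB}}_r(K_N)$; (3) $\gamma^{\mathrm{Bd}}_r(G_N,u)=\gamma^{\mathrm{Bd}}_r(K_N)$ and $\gamma^{\mathrm{dB}}_r(G_N,u)=\gamma^{\mathrm{dB}}_r(K_N)$.
   Context: Each edge $\{u,v\}$ has a positive weight $w(u,v)$ and $\deg(u)=\sum_{v} w(u,v)$. Each node is occupied by a resident (fitness 1) or a mutant (fitness $r\ge 1$); $f(u)$ is the fitness at $u$ and $F=\sum_u f(u)$. Moran Birth-death (Bd) process: each step a node $u$ is chosen with probability $f(u)/F$ and its offspring replaces a neighbor $v$ chosen with probability $w(u,v)/\deg(u)$. Moran death-Birth (dB) process: each step a uniformly random node $v$ dies and is replaced by the offspring of a neighbor $u$ chosen with probability $f(u)w(u,v)/\sum_{u'}f(u')w(u',v)$. For a process $p\in\{\mathrm{Bd},\mathrm{dB}\}$, $\gamma^{p}_r(G_N,u)$ is the probability that, starting with a single mutant at $u$ (all other nodes residents), the first step that changes the set of mutant nodes is one in which the mutant at $u$ places its offspring onto a neighboring node (increasing the number of mutants), as opposed to the mutant at $u$ being replaced by a resident. $K_N$ is the unweighted complete graph on $N$ nodes; $\gamma^p_r(K_N)$ is this quantity on $K_N$ (independent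 of the node). *)

From HB Require Import structures.
From mathcomp Require Import all_boot all_order all_algebra.
Set Implicit Arguments. Unset Strict Implicit. Unset Printing Implicit Defensive.
Import Order.TTheory GRing.Theory Num.Theory.
Local Open Scope ring_scope.

(* A weighted graph on the finite node set T is given by a weight function
   w : T -> T -> R; {x,y} is an edge iff 0 < w x y. *)

Definition wgraph (R : realFieldType) (T : finType) (w : T -> T -> R) : Prop :=
  [/\ forall x y, w x y = w y x,
      forall x y, 0 <= w x y,
      forall x, w x x = 0 &
      forall x y, connect (fun a b => 0 < w a b) x y].

Section Moran.
Variables (R : realFieldType) (T : finType) (w : T -> T -> R) (r : R) (u : T).

Definition deg (x : T) : R := \sum_y w x y.

(* fitness in the configuration with a single mutant at u *)
Definition fit (x : T) : R := if x == u then r else 1.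

Definition totfit : R := \sum_x fit x.

(* Birth-death: probability that in one step a reproduces and its
   offspring replaces b *)
Definition Bd_step (a b : T) : R := fit a / totfit * (w a b / deg a).

(* mutant at u places offspring on a (resident) neighbour *)
Definition Bd_inc : R := \sum_(b | b != u) Bd_step u b.
(* mutant at u is replaced by a resident *)
Definition Bd_dec : R := \sum_(a | a != u) Bd_step a u.

(* death-Birth: probability that in one step v dies and is replaced by the
   offspring of a *)
Definition dB_step (v a : T) : R :=
  1 / #|T|%:R * (fit a * w a v / \sum_a' fit a' * w a' v).

Definition dB_inc : R := \sum_(v | v != u) dB_step v u.
Definition dB_dec : R := \sum_(a | a != u) dB_step u a.

(* probability that the first step changing the mutant set is an increase *)
Definition gamma_Bd : R := Bd_inc / (Bd_inc + Bd_dec).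
Definition gamma_dB : R := dB_inc / (dB_inc + dB_dec).

End Moran.

Definition complete_w (R : realFieldType) (T : finType) (x y : T) : R :=
  if x == y then 0 else 1.

From HB Require Import structures.
From mathcomp Require Import all_boot all_order all_algebra.
From mathcomp Require Import ring lra.
Import Order.TTheory GRing.Theory Num.Theory.
Set Implicit Arguments. Unset Strict Implicit. Unset Printing Implicit Defensive.
Local Open Scope ring_scope.

(* Put x_v := w(u,v) / deg v.  Then gamma_Bd = r / (r + S) with S := sum_v x_v,
   and gamma_dB = D / (D + 1) with D := sum_v f(x_v) for the concave map
   f(x) := r x / (1 + (r - 1) x).  On K_N every x_v equals c := 1 / (N - 1), so
   S_K = 1.  If S > 1, gamma_Bd drops below its value on K_N.  Otherwise the
   tangent line of f at c gives D - D_K <= f'(c) (S - 1) <= 0, so gamma_dB does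
   not exceed its value on K_N, strictly unless S = 1 and D = D_K, in which case
   both quantities agree. *)

Section RatioFacts.
Variable R : realFieldType.

(* For x = w(u,v) / deg v this is the probability that, when v dies, it is
   replaced by the offspring of the mutant at u. *)
Definition dB_win (r x : R) : R := r * x / (1 + (r - 1) * x).

Definition dB_slope (r c : R) : R := r / (1 + (r - 1) * c) ^+ 2.

Lemma dB_den_gt0 (r x : R) : 1 <= r -> 0 <= x -> 0 < 1 + (r - 1) * x.
Proof. by move=> r_ge1 x_ge0; rewrite ltr_pwDl // mulr_ge0 // subr_ge0. Qed.

Lemma dB_win_ge0 (r x : R) : 1 <= r -> 0 <= x -> 0 <= dB_win r x.
Proof.
move=> r_ge1 x_ge0; have r_ge0 : 0 <= r by lra.
by rewrite /dB_win divr_ge0 ?mulr_ge0 // ltW ?dB_den_gt0.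
Qed.

Lemma dB_slope_gt0 (r c : R) : 1 <= r -> 0 <= c -> 0 < dB_slope r c.
Proof.
move=> r_ge1 c_ge0; rewrite /dB_slope divr_gt0 ?exprn_gt0 ?dB_den_gt0 //.
by rewrite (lt_le_trans ltr01).
Qed.

Lemma dB_win_tangent (r c x : R) : 1 <= r -> 0 <= c -> 0 <= x ->
  dB_win r x <= dB_win r c + dB_slope r c * (x - c).
Proof.
move=> r_ge1 c_ge0 x_ge0.
have den_x := dB_den_gt0 r_ge1 x_ge0; have den_c := dB_den_gt0 r_ge1 c_ge0.
rewrite -subr_ge0.
have -> : dB_win r c + dB_slope r c * (x - c) - dB_win r x
    = r * (r - 1) * (x - c) ^+ 2 / ((1 + (r - 1) * c) ^+ 2 * (1 + (r - 1) * x)).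
  by rewrite /dB_win /dB_slope; field; rewrite !gt_eqF.
have r_ge0 : 0 <= r by lra.
apply: divr_ge0; first by rewrite mulr_ge0 ?sqr_ge0 // mulr_ge0 // subr_ge0.
by rewrite mulr_ge0 ?sqr_ge0 // ltW.
Qed.

Lemma ltr_div_addr2l (a x y : R) : 0 < a -> 0 <= y -> y < x ->
  a / (a + x) < a / (a + y).
Proof.
move=> a_gt0 y_ge0 lt_yx.
have ax_gt0 : 0 < a + x by lra.
have ay_gt0 : 0 < a + y by lra.
by rewrite ltr_pM2l // ltf_pV2 ?posrE // ltrD2l.
Qed.

Lemma ltr_div_add1 (x y : R) : 0 <= x -> x < y -> x / (x + 1) < y / (y + 1).
Proof.
move=> x_ge0 lt_xy.
have x1_gt0 : 0 < x + 1 by lra.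
have y1_gt0 : 0 < y + 1 by lra.
rewrite ltr_pdivrMr // mulrAC ltr_pdivlMr //; lra.
Qed.

End RatioFacts.

Section Graph.
Variables (R : realFieldType) (T : finType).
Local Notation K := (@complete_w R T).

Definition nbr_share (w : T -> T -> R) (u v : T) : R := w u v / deg w v.

Definition share_sum (w : T -> T -> R) (u : T) : R :=
  \sum_(v | v != u) nbr_share w u v.

Definition dB_win_sum (w : T -> T -> R) (r : R) (u : T) : R :=
  \sum_(v | v != u) dB_win r (nbr_share w u v).

Lemma deg_gt0 (w : T -> T -> R) (v : T) : (1 < #|T|)%N -> wgraph w -> 0 < deg w v.
Proof.
move=> T_gt1 [_ w_ge0 _ w_conn].
have [y y_neq_v] : exists y, y != v.
  apply/existsP; rewrite -negb_forall; apply/forallP => all_eq_v.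
  suff : (#|T| <= 1)%N by rewrite leqNgt T_gt1.
  rewrite -(card1 v); apply/subset_leq_card/subsetP => z _.
  by rewrite inE; apply: all_eq_v.
have /connectP [[|z p] /= vp y_last] := w_conn v y.
  by rewrite y_last eqxx in y_neq_v.
case/andP: vp => w_vz _.
by rewrite /deg (bigD1 z) //= ltr_wpDr // sumr_ge0.
Qed.

Lemma totfit_gt0 (r : R) (u : T) : 1 <= r -> 0 < totfit r u.
Proof.
move=> r_ge1; rewrite /totfit (bigD1 u) //= /fit eqxx ltr_wpDr ?(lt_le_trans ltr01) //.
by apply: sumr_ge0 => x _; case: (x == u); rewrite ?ler01 ?(le_trans ler01).
Qed.

Lemma deg_complete (v : T) : deg K v = (#|T|.-1)%:R.
Proof.
rewrite /deg (bigD1 v) //= /complete_w eqxx add0r.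
rewrite (eq_bigr (fun _ => 1)); last by move=> y y_neq_v; rewrite eq_sym (negbTE y_neq_v).
by rewrite sumr_const cardC1.
Qed.

Lemma nbr_share_complete (u v : T) : v != u ->
  nbr_share K u v = (#|T|.-1)%:R^-1.
Proof.
move=> v_neq_u.
by rewrite /nbr_share deg_complete /complete_w eq_sym (negbTE v_neq_u) div1r.
Qed.

Lemma share_sum_complete (u : T) : (1 < #|T|)%N -> share_sum K u = 1.
Proof.
move=> T_gt1; rewrite /share_sum (eq_bigr _ (@nbr_share_complete u)).
by rewrite sumr_const cardC1 -[_ *+ _]mulr_natr mulVf // pnatr_eq0 -lt0n -subn1 subn_gt0.
Qed.

Lemma dB_win_sum_le_complete (w : T -> T -> R) (r : R) (u : T) :
  (1 < #|T|)%N -> 1 <= r -> (forall v, 0 <= nbr_share w u v) ->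
  dB_win_sum w r u <=
    dB_win_sum K r u + dB_slope r (#|T|.-1)%:R^-1 * (share_sum w u - 1).
Proof.
move=> T_gt1 r_ge1 share_ge0.
rewrite -[X in share_sum w u - X](share_sum_complete u T_gt1).
rewrite /dB_win_sum /share_sum -sumrB mulr_sumr -big_split /=.
apply: ler_sum => v v_neq_u; rewrite nbr_share_complete //.
by apply: dB_win_tangent; rewrite ?invr_ge0.
Qed.

Section Gamma.
Variables (w : T -> T -> R) (r : R) (u : T).
Hypotheses (w_sym : forall x y, w x y = w y x) (w_ge0 : forall x y, 0 <= w x y)
  (w_xx : forall x, w x x = 0) (deg_w_gt0 : forall v, 0 < deg w v) (r_ge1 : 1 <= r).

Lemma nbr_share_ge0 (v : T) : 0 <= nbr_share w u v.
Proof. by rewrite /nbr_share divr_ge0 // ltW. Qed.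

Lemma deg_sum_neq : deg w u = \sum_(v | v != u) w u v.
Proof. by rewrite /deg (bigD1 u) //= w_xx add0r. Qed.

Lemma gamma_BdE : gamma_Bd w r u = r / (r + share_sum w u).
Proof.
have F_gt0 := totfit_gt0 u r_ge1.
have S_ge0 : 0 <= share_sum w u by apply: sumr_ge0 => v _; apply: nbr_share_ge0.
have inc : Bd_inc w r u = r / totfit r u.
  rewrite /Bd_inc /Bd_step -mulr_sumr -mulr_suml -deg_sum_neq divff ?gt_eqF //.
  by rewrite /fit eqxx mulr1.
have dec : Bd_dec w r u = share_sum w u / totfit r u.
  rewrite /Bd_dec /share_sum mulr_suml; apply: eq_bigr => a a_neq_u.
  by rewrite /Bd_step /fit (negbTE a_neq_u) /nbr_share w_sym mulrC div1r.
have rS_gt0 : 0 < r + share_sum w u by rewrite ltr_wpDr // (lt_le_trans ltr01).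
by rewrite /gamma_Bd inc dec; field; rewrite !gt_eqF.
Qed.

Lemma sum_fit_w (v : T) : \sum_a fit r u a * w a v = deg w v + (r - 1) * w u v.
Proof.
rewrite /deg (bigD1 u) //= [in RHS](bigD1 u) //= /fit eqxx.
rewrite (eq_bigr (fun a => w v a)); last by move=> a /negbTE ->; rewrite mul1r w_sym.
rewrite w_sym; ring.
Qed.

Lemma gamma_dBE : gamma_dB w r u = dB_win_sum w r u / (dB_win_sum w r u + 1).
Proof.
have N_gt0 : 0 < #|T|%:R :> R by rewrite ltr0n; apply/card_gt0P; exists u.
have D_ge0 : 0 <= dB_win_sum w r u.
  by apply: sumr_ge0 => v _; apply/dB_win_ge0/nbr_share_ge0.
have inc : dB_inc w r u = dB_win_sum w r u / #|T|%:R.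
  rewrite /dB_inc /dB_win_sum mulr_suml; apply: eq_bigr => v _.
  rewrite /dB_step sum_fit_w /fit eqxx /dB_win /nbr_share.
  have deg_v := deg_w_gt0 v.
  have wr_ge0 : 0 <= (r - 1) * w u v by rewrite mulr_ge0 ?subr_ge0.
  by field; rewrite !gt_eqF //; lra.
have dec : dB_dec w r u = 1 / #|T|%:R.
  rewrite /dB_dec /dB_step -mulr_sumr.
  rewrite (eq_bigr (fun a => w u a / deg w u)); last first.
    move=> a /negbTE a_neq_u.
    by rewrite sum_fit_w w_xx mulr0 addr0 /fit a_neq_u mul1r w_sym.
  by rewrite -mulr_suml -deg_sum_neq divff ?gt_eqF // mulr1.
rewrite /gamma_dB inc dec; field.
by rewrite !gt_eqF //; lra.
Qed.

End Gamma.

Lemma complete_w_props :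
  [/\ forall x y : T, K x y = K y x,
      forall x y : T, 0 <= K x y,
      forall x : T, K x x = 0 &
      (1 < #|T|)%N -> forall v : T, 0 < deg K v].
Proof.
rewrite /complete_w; split=> [x y|x y|x|T_gt1 v]; first by rewrite eq_sym.
- by case: (x == y).
- by rewrite eqxx.
by rewrite deg_complete ltr0n -subn1 subn_gt0.
Qed.

End Graph.

Theorem theorem2 (R : realFieldType) (T : finType) (w : T -> T -> R)
    (u : T) (r : R) :
  (1 < #|T|)%N -> wgraph w -> 1 <= r ->
  gamma_Bd w r u < gamma_Bd (@complete_w R T) r u \/
  gamma_dB w r u < gamma_dB (@complete_w R T) r u \/
  (gamma_Bd w r u = gamma_Bd (@complete_w R T) r u /\
   gamma_dB w r u = gamma_dB (@complete_w R T) r u).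
Proof.
move=> T_gt1 w_graph r_ge1.
have deg_w_gt0 v := deg_gt0 v T_gt1 w_graph.
have [w_sym w_ge0 w_xx _] := w_graph.
have [K_sym K_ge0 K_xx /(_ T_gt1) deg_K_gt0] := @complete_w_props R T.
rewrite !gamma_BdE // !gamma_dBE // share_sum_complete //.
have D_ge0 : 0 <= dB_win_sum w r u.
  by apply: sumr_ge0 => v _; apply/dB_win_ge0/nbr_share_ge0.
have D_le := dB_win_sum_le_complete T_gt1 r_ge1 (nbr_share_ge0 u w_ge0 deg_w_gt0).
have k_gt0 : 0 < dB_slope r (#|T|.-1)%:R^-1 by rewrite dB_slope_gt0 // invr_ge0.
have r_gt0 : 0 < r by lra.
have [S_lt1|S_gt1|S_eq1] := ltrgtP (share_sum w u) 1.
- right; left; apply: ltr_div_add1 => //.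
  by rewrite (le_lt_trans D_le) // -ltrBrDl subrr pmulr_rlt0 // subr_lt0.
- by left; apply: ltr_div_addr2l; rewrite ?ler01.
rewrite S_eq1 subrr mulr0 addr0 in D_le.
have [D_lt|D_ge] := ltrP (dB_win_sum w r u) (dB_win_sum (@complete_w R T) r u).
  by right; left; apply: ltr_div_add1.
have D_eq : dB_win_sum w r u = dB_win_sum (@complete_w R T) r u.
  by apply/le_anti; rewrite D_le D_ge.
by right; right; rewrite S_eq1 D_eq.
Qed.
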